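(* Let $B$ be a Noetherian ring, $\varphi\in B^{m\times n}$ with $m\le n$, $1\le t\le m$, and $S=B/I_t(\varphi)$. Let $\varphi'\in B^{m\times(t-1)}$ be the submatrix of the first $t-1$ columns, $\varphi''\in B^{(t-1)\times n}$ the submatrix of the first $t-1$ rows, and $\Delta=\det(\delta)$ where $\delta\in B^{(t-1)\times(t-1)}$ is the upper-left $(t-1)\times(t-1)$ submatrix of $\varphi$. Then $I_{t-1}(\varphi')\cdot I_{t-1}(\varphi'')S\subset\Delta S$.
   Context: $I_k(\psi)$ denotes the ideal generated by the $k\times k$ minors of a matrix $\psi$ (with $I_0=B$). *)

From HB Require Import structures.
From mathcomp Require Import all_boot all_order all_algebra.
Set Implicit Arguments. Unset Strict Implicit. Unset Printing Implicit Defensive.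
Import GRing.Theory.
Local Open Scope ring_scope.

Section IdealDefs.
Variable R : comNzRingType.

Definition in_ideal_gen (G : R -> Prop) (x : R) : Prop :=
  exists (k : nat) (r g : 'I_k -> R),
    (forall i, G (g i)) /\ x = \sum_(i < k) r i * g i.

Definition is_ideal (I : R -> Prop) : Prop :=
  [/\ I 0, (forall x y, I x -> I y -> I (x + y)) & (forall r x, I x -> I (r * x))].

Definition noetherian_ring : Prop :=
  forall I : R -> Prop, is_ideal I ->
    exists (k : nat) (g : 'I_k -> R),
      forall x, I x <-> in_ideal_gen (fun y => exists i, y = g i) x.

Definition in_ideal_prod (I J : R -> Prop) (x : R) : Prop :=
  in_ideal_gen (fun y => exists a b, [/\ I a, J b & y = a * b]) x.

Definition is_minor (m n k : nat) (A : 'M[R]_(m, n)) (x : R) : Prop :=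
  exists (f : 'I_k -> 'I_m) (g : 'I_k -> 'I_n),
    {homo f : i j / (i < j)%N} /\ {homo g : i j / (i < j)%N} /\
    x = \det (\matrix_(i < k, j < k) A (f i) (g j)).

(* I_k(A): ideal generated by the k x k minors (I_0(A) = R since the empty
   determinant is 1) *)
Definition minor_ideal (m n k : nat) (A : 'M[R]_(m, n)) (x : R) : Prop :=
  in_ideal_gen (is_minor k A) x.

Definition first_cols (m n k : nat) (hk : (k <= n)%N) (A : 'M[R]_(m, n))
  : 'M[R]_(m, k) := \matrix_(i < m, j < k) A i (widen_ord hk j).
Definition first_rows (m n k : nat) (hk : (k <= m)%N) (A : 'M[R]_(m, n))
  : 'M[R]_(k, n) := \matrix_(i < k, j < n) A (widen_ord hk i) j.

End IdealDefs.

Lemma pred_le_trans (t m : nat) : (t <= m)%N -> (t.-1 <= m)%N.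
Proof. by move=> h; apply: leq_trans h; apply: leq_pred. Qed.

Lemma pred_le_trans2 (t m n : nat) : (t <= m)%N -> (m <= n)%N -> (t.-1 <= n)%N.
Proof. by move=> h1 h2; apply: pred_le_trans; apply: leq_trans h2. Qed.

From HB Require Import structures.
From mathcomp Require Import all_boot all_order all_algebra all_fingroup.
From mathcomp Require Import ring zify.
Set Implicit Arguments. Unset Strict Implicit. Unset Printing Implicit Defensive.
Import Order.TTheory GRing.Theory.
Local Open Scope ring_scope.

(* Since phi' has only t-1 columns and phi'' only t-1 rows, their (t-1)-minors
   are the det phi[F, Q0] and the det phi[P0, G], with P0, Q0 the first t-1
   rows and columns.  With k = t-1 it therefore suffices to prove, for any row
   selections P, F and column selections Q, G of size k, the exchange relation
     det phi[F,Q] det phi[P,G] = det phi[P,Q] det phi[F,G]  mod I_(k+1)(phi).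
   Put [phi[P,Q] | phi[P,G]] on top of a 2k x 2k matrix and write each row of
   [phi[F,Q] | phi[F,G]] as [phi[F,Q] | 0] + [0 | phi[F,G]].  Switching the
   bottom rows from the first summand to the second one at a time, the
   multilinearity of the determinant telescopes the difference of the two
   block-triangular extremes into an alternating sum of determinants with k+1
   rows taken from phi; Laplace expansion along the remaining rows puts these
   in I_(k+1)(phi). *)

Section Ideals.
Variable R : comNzRingType.
Implicit Types (I G : R -> Prop) (d x : R).

Lemma ideal_sum I k (F : 'I_k -> R) :
  is_ideal I -> (forall i, I (F i)) -> I (\sum_(i < k) F i).
Proof.
case=> I0 ID _; elim: k F => [|k IHk] F IF; first by rewrite big_ord0.
by rewrite big_ord_recr; apply: ID; [apply: IHk|].
Qed.

Lemma ideal_gen_min I G : is_ideal I -> (forall y, G y -> I y) ->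
  forall x, in_ideal_gen G x -> I x.
Proof.
move=> idI GI _ [k [r [g [Gg ->]]]]; apply: ideal_sum => // i.
by case: idI => _ _ IM; apply/IM/GI.
Qed.

Lemma is_ideal_gen G : is_ideal (in_ideal_gen G).
Proof.
split.
- by exists 0%N, (fun=> 0), (fun=> 0); split; [case|rewrite big_ord0].
- move=> _ _ [k1 [r1 [g1 [G1 ->]]]] [k2 [r2 [g2 [G2 ->]]]].
  pose cat (h1 : 'I_k1 -> R) (h2 : 'I_k2 -> R) i :=
    match split i with inl a => h1 a | inr b => h2 b end.
  exists (k1 + k2)%N, (cat r1 r2), (cat g1 g2); split.
    by move=> i; rewrite /cat; case: (split i).
  by rewrite big_split_ord /cat; congr (_ + _); apply: eq_bigr => i _;
    rewrite ?(unsplitK (inl _ _)) ?(unsplitK (inr _ _)).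
- move=> c _ [k [r [g [Gg ->]]]]; exists k, (fun i => c * r i), g; split => //.
  by rewrite mulr_sumr; apply: eq_bigr => i _; rewrite mulrA.
Qed.

Lemma mem_ideal_gen G x : G x -> in_ideal_gen G x.
Proof.
by move=> Gx; exists 1%N, (fun=> 1), (fun=> x); split; rewrite ?big_ord1 ?mul1r.
Qed.

Lemma is_ideal_mul_preim I x : is_ideal I -> is_ideal (fun a => I (x * a)).
Proof.
case=> I0 ID IM; split=> [|a b|c a]; first by rewrite mulr0.
  by rewrite mulrDr; apply: ID.
by rewrite mulrCA; apply: IM.
Qed.

Lemma ideal_prod_gen_min I G1 G2 : is_ideal I ->
    (forall a b, G1 a -> G2 b -> I (a * b)) ->
  forall x, in_ideal_prod (in_ideal_gen G1) (in_ideal_gen G2) x -> I x.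
Proof.
move=> idI IG; apply: ideal_gen_min (idI) _ => _ [a [b [Ga Gb ->]]].
rewrite mulrC; apply: ideal_gen_min (is_ideal_mul_preim _ idI) _ _ Ga => a0 G1a0.
rewrite mulrC; apply: ideal_gen_min (is_ideal_mul_preim _ idI) _ _ Gb => b0 G2b0.
exact: IG.
Qed.

Lemma is_ideal_principal_add I d : is_ideal I ->
  is_ideal (fun x => exists y z, I z /\ x = d * y + z).
Proof.
case=> I0 ID IM; split.
- by exists 0, 0; rewrite mulr0 addr0.
- move=> _ _ [y1 [z1 [Iz1 ->]]] [y2 [z2 [Iz2 ->]]].
  by exists (y1 + y2), (z1 + z2); rewrite mulrDr addrACA; split; first apply: ID.
- move=> c _ [y [z [Iz ->]]].
  by exists (c * y), (c * z); rewrite mulrDr mulrCA; split; first apply: IM.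
Qed.

End Ideals.

Lemma inj_ord_sort_perm K m (f : 'I_K -> 'I_m) : injective f ->
  exists (h : 'I_K -> 'I_m) (s : 'S_K), {homo h : i j / (i < j)%N} /\ f =1 h \o s.
Proof.
move=> f_inj; pose ft := [tuple f i | i < K].
pose st := sort_tuple <=%O ft.
have /tuple_permP[s ftE] : perm_eq ft st by rewrite perm_sym perm_sort.
have st_lt : sorted <%O st by rewrite sort_lt_sorted map_inj_uniq ?enum_uniq.
exists (tnth st), s; split=> [i j lt_ij | i].
  have := @lt_sorted_ltn_nth _ _ (f i) st st_lt i j.
  by rewrite !inE size_tuple !ltn_ord lt_ij !(tnth_nth (f i)) => /(_ isT isT).
by have /val_inj/(congr1 (fun t => tnth t i)) := ftE; rewrite !tnth_mktuple.
Qed.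

Lemma ord_incr_ge k (g : 'I_k -> 'I_k) :
  {homo g : i j / (i < j)%N} -> forall i : 'I_k, (i <= g i)%N.
Proof.
move=> g_incr [i lt_ik]; elim: i lt_ik => [|i IHi] lt_ik //=.
have lt_i := ltnW lt_ik.
exact: leq_ltn_trans (IHi lt_i) (g_incr (Ordinal lt_i) (Ordinal lt_ik) (ltnSn i)).
Qed.

Lemma ord_incr_id k (g : 'I_k -> 'I_k) : {homo g : i j / (i < j)%N} -> g =1 id.
Proof.
move=> g_incr i; apply/val_inj/eqP; rewrite eqn_leq (ord_incr_ge g_incr) andbT.
have rev_incr : {homo (@rev_ord k) \o g \o (@rev_ord k) : i j / (i < j)%N}.
  move=> a b lt_ab; have lt_rev : (rev_ord b < rev_ord a)%N.
    by rewrite /=; have := ltn_ord b; lia.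
  by have := g_incr _ _ lt_rev; have := ltn_ord (g (rev_ord a)); rewrite /=; lia.
have := ord_incr_ge rev_incr (rev_ord i); rewrite /= rev_ordK.
have := ltn_ord (g i); have := ltn_ord i; lia.
Qed.

Lemma card_lift s (U : {pred 'I_s.+1}) r :
  #|U| = ((r \in U) + #|[pred i | lift r i \in U]|)%N.
Proof.
rewrite -!sum1_card !(big_mkcond (fun i => i \in _)) /=.
by rewrite (bigD1_ord r) //=; congr (_ + _)%N.
Qed.

Section Minors.
Variables (R : comNzRingType) (m n : nat) (A : 'M[R]_(m, n)).

Lemma det_mxsub_perm k (s s' : 'S_k) (C : 'M[R]_k) :
  \det (mxsub s s' C) = (-1) ^+ s * (-1) ^+ s' * \det C.
Proof.
rewrite mxsubrc -row_permEsub -col_permEsub row_permE col_permE.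
by rewrite !det_mulmx !det_perm odd_permV mulrAC mulrA.
Qed.

Lemma minor_ideal_det_mxsub k (f : 'I_k -> 'I_m) (g : 'I_k -> 'I_n) :
  minor_ideal k A (\det (mxsub f g A)).
Proof.
have [I0 _ IM] := is_ideal_gen (is_minor k A).
have [/injectiveP f_inj|/injectivePn[i1 [i2 neq_i12 f12]]] := boolP (injectiveb f);
  last by rewrite (determinant_alternate neq_i12) // => j; rewrite !mxE f12.
have [/injectiveP g_inj|/injectivePn[j1 [j2 neq_j12 g12]]] := boolP (injectiveb g);
  last by rewrite -det_tr (determinant_alternate neq_j12) // => i; rewrite !mxE g12.
have [h [s [h_incr fE]]] := inj_ord_sort_perm f_inj.
have [h' [s' [h'_incr gE]]] := inj_ord_sort_perm g_inj.
rewrite (eq_mxsub _ _ fE gE) mxsub_comp det_mxsub_perm.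
by apply/IM/mem_ideal_gen; exists h, h'.
Qed.

Lemma minor_ideal_det_rows k s (B : 'M[R]_s) (U : {pred 'I_s})
    (rf : 'I_s -> 'I_m) (cg : 'I_s -> 'I_n) :
    (k <= #|U|)%N -> (forall i, i \in U -> forall j, B i j = A (rf i) (cg j)) ->
  minor_ideal k A (\det B).
Proof.
elim: s B U rf cg => [|s IHs] B U rf cg le_k_U rowsB.
  have := leq_trans le_k_U (max_card U); rewrite card_ord leqn0 => /eqP ->.
  by rewrite det_mx00 -(det_mx00 (mxsub rf cg A)); apply: minor_ideal_det_mxsub.
have [_ _ IM] := is_ideal_gen (is_minor k A).
have expand r : (k <= #|[pred i | lift r i \in U]|)%N -> minor_ideal k A (\det B).
  move=> le_k; rewrite (expand_det_row _ r).
  apply: ideal_sum (is_ideal_gen _) _ => j.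
  rewrite /cofactor mulrA; apply/IM/(IHs _ _ (rf \o lift r) (cg \o lift j) le_k).
  by move=> i Ui j'; rewrite !mxE; apply: rowsB.
have [r /= notUr | allU] := pickP [pred i | i \notin U].
  by apply: (expand r); rewrite (card_lift U r) (negbTE notUr) in le_k_U.
have {}allU i : i \in U by apply/negbNE/negbT/allU.
case: (ltnP s k) => [lt_s_k | le_k_s]; last first.
  apply: (expand ord0).
  by rewrite (eq_card (B := 'I_s)) ?card_ord // => i; rewrite !inE allU.
have := leq_trans le_k_U (max_card U); rewrite card_ord => le_k_Ss.
have -> : k = s.+1 by apply/eqP; rewrite eqn_leq lt_s_k le_k_Ss.
rewrite (_ : B = mxsub rf cg A); first exact: minor_ideal_det_mxsub.
by apply/matrixP => i j; rewrite mxE rowsB.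
Qed.

End Minors.

Section MixRows.
Variables (R : comNzRingType) (p k : nat) (u w : 'M[R]_(k, p + k)).

Definition mix_rows (j : nat) : 'M[R]_(k, p + k) :=
  \matrix_(l, c) if (l < j)%N then w l c else u l c.

Definition mix_rows_sum (j : nat) : 'M[R]_(k, p + k) :=
  \matrix_(l, c) if (l < j)%N then w l c
                 else if l == j :> nat then u l c + w l c else u l c.

Variable T : 'M[R]_(p, p + k).

Lemma det_mix_rows_sum j : (j < k)%N ->
  \det (col_mx T (mix_rows_sum j)) =
  \det (col_mx T (mix_rows j)) + \det (col_mx T (mix_rows j.+1)).
Proof.
move=> lt_jk; set i0 := rshift p (Ordinal lt_jk).
have row'E (X Y : 'M[R]_(k, p + k)) :
    (forall l : 'I_k, l != j :> nat -> X l =1 Y l) ->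
    row' i0 (col_mx T X) = row' i0 (col_mx T Y).
  move=> XY; apply/matrixP => i c; rewrite !mxE.
  case: (split_ordP (lift i0 i)) => [a _|l li] //.
  apply: XY; apply: contraNneq (neq_lift i0 i) => lj.
  by rewrite li; apply/eqP/val_inj; rewrite /= lj.
rewrite -[\det (col_mx T (mix_rows j))]mul1r -[\det (col_mx T (mix_rows j.+1))]mul1r.
apply: (determinant_multilinear (i0 := i0)); rewrite ?scale1r.
- by apply/rowP => c; rewrite !rowKd !mxE /= ltnn eqxx ltnSn.
- by apply: row'E => l nlj c; rewrite !mxE (negbTE nlj).
- by apply: row'E => l nlj c; rewrite !mxE ltnS leq_eqVlt (negbTE nlj).
Qed.

Lemma det_mix_rows_telescope :
  \sum_(j < k) (-1) ^+ j * \det (col_mx T (mix_rows_sum j)) =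
  \det (col_mx T u) - (-1) ^+ k * \det (col_mx T w).
Proof.
have mix0 : mix_rows 0 = u by apply/matrixP => l c; rewrite mxE.
have mixk : mix_rows k = w by apply/matrixP => l c; rewrite mxE ltn_ord.
pose D j := \det (col_mx T (mix_rows j)).
have := @telescope_sumr_eq _ 0 k (fun j => - ((-1) ^+ j * D j))
  (fun j => (-1) ^+ j * \det (col_mx T (mix_rows_sum j))) (leq0n k).
rewrite big_mkord -mix0 -mixk expr0 mul1r opprK addrC => -> // j /andP[_ lt_jk].
by rewrite det_mix_rows_sum // exprS /D; ring.
Qed.

End MixRows.

Section BlockExchange.
Variables (R : comNzRingType) (k : nat).

Lemma mul_block_mx_swap (A B C D : 'M[R]_k) :
  block_mx A B C D *m block_mx 0 1%:M 1%:M 0 = block_mx B A D C.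
Proof. by rewrite mulmx_block !mulmx0 !mulmx1 !addr0 !add0r. Qed.

Lemma det_block_swap : \det (block_mx 0 1%:M 1%:M 0 : 'M[R]_(k + k)) = (-1) ^+ k.
Proof.
have := det_mix_rows_telescope (row_mx 1%:M 0) (row_mx 0 1%:M)
  (row_mx 1%:M 1%:M : 'M[R]_(k, k + k)).
(* With identity blocks every summand has two equal rows. *)
rewrite big1 => [|j _]; last first.
  rewrite (determinant_alternate (i1 := lshift k j) (i2 := rshift k j))
    ?mulr0 ?eq_lrshift //.
  move=> c; rewrite col_mxEu col_mxEd [RHS]mxE ltnn eqxx.
  by case: (split_ordP c) => a ->; rewrite ?(row_mxEl, row_mxEr) !mxE ?addr0 ?add0r.
pose I : 'M[R]_k := 1%:M.
rewrite -/I -/(block_mx I I I 0) -/(block_mx I I 0 I) -(mul_block_mx_swap I I 0 I).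
rewrite det_mulmx det_ublock /I !det1 !mul1r mulr1.
by move=> /eqP; rewrite eq_sym subr_eq0 => /eqP.
Qed.

Lemma det_block_exchange (dl be al ga : 'M[R]_k) :
  \sum_(j < k) (-1) ^+ j *
    \det (col_mx (row_mx dl be) (mix_rows_sum (row_mx al 0) (row_mx 0 ga) j)) =
  (-1) ^+ k * (\det al * \det be - \det dl * \det ga).
Proof.
rewrite det_mix_rows_telescope -/(block_mx dl be al 0) -/(block_mx dl be 0 ga).
by rewrite -mul_block_mx_swap det_mulmx !det_ublock det_block_swap; ring.
Qed.

End BlockExchange.

Lemma minor_ideal_exchange (R : comNzRingType) m n k (A : 'M[R]_(m, n))
    (P F : 'I_k -> 'I_m) (Q G : 'I_k -> 'I_n) :
  minor_ideal k.+1 A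
    (\det (mxsub F Q A) * \det (mxsub P G A)
     - \det (mxsub P Q A) * \det (mxsub F G A)).
Proof.
have [_ _ IM] := is_ideal_gen (is_minor k.+1 A).
rewrite -(signrMK k (_ - _)) -det_block_exchange.
apply: (IM); apply: ideal_sum (is_ideal_gen _) _ => j; apply: (IM).
pose rf i := match split i with inl a => P a | inr b => F b end.
pose cg i := match split i with inl a => Q a | inr b => G b end.
pose U := rshift k j |: [set lshift k a | a : 'I_k].
apply: (@minor_ideal_det_rows R m n A k.+1 (k + k) _ U rf cg).
  rewrite cardsU1 card_imset ?card_ord; last exact: lshift_inj.
  by case: imsetP => // -[a _ /eqP]; rewrite eq_rlshift.
move=> i /setU1P[-> | /imsetP[a _ ->]] c; rewrite /rf /cg.
  rewrite col_mxEd mxE ltnn eqxx (unsplitK (inr _ _)).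
  by case: (split_ordP c) => b ->; rewrite ?row_mxEl ?row_mxEr !mxE ?addr0 ?add0r.
rewrite col_mxEu (unsplitK (inl _ _)).
by case: (split_ordP c) => b ->; rewrite ?row_mxEl ?row_mxEr mxE.
Qed.

Theorem lemma3p2 (B : comNzRingType) (m n t : nat) (phi : 'M[B]_(m, n))
  (hBnoeth : noetherian_ring B)
  (hmn : (m <= n)%N) (ht1 : (1 <= t)%N) (htm : (t <= m)%N) :
  let phi' := first_cols (pred_le_trans2 htm hmn) phi in
  let phi'' := first_rows (pred_le_trans htm) phi in
  let delta := first_cols (pred_le_trans2 htm hmn) phi'' in
  let Delta := \det delta in
  forall x : B,
    in_ideal_prod (minor_ideal t.-1 phi') (minor_ideal t.-1 phi'') x ->
    exists (y z : B), minor_ideal t phi z /\ x = Delta * y + z.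
Proof.
move=> phi' phi'' delta Delta.
apply: ideal_prod_gen_min (is_ideal_principal_add Delta (is_ideal_gen _)) _.
move=> _ _ [f [g [_ [g_incr ->]]]] [f' [g' [f'_incr [_ ->]]]].
set rows := widen_ord (pred_le_trans htm).
set cols := widen_ord (pred_le_trans2 htm hmn).
have -> : \matrix_(i, j) phi' (f i) (g j) = mxsub f cols phi.
  by apply/matrixP => i j; rewrite !mxE (ord_incr_id g_incr).
have -> : \matrix_(i, j) phi'' (f' i) (g' j) = mxsub rows g' phi.
  by apply/matrixP => i j; rewrite !mxE (ord_incr_id f'_incr).
have DeltaE : Delta = \det (mxsub rows cols phi).
  by rewrite /Delta /delta; congr (\det _); apply/matrixP => i j; rewrite !mxE.
exists (\det (mxsub f g' phi)).
exists (\det (mxsub f cols phi) * \det (mxsub rows g' phi)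
        - Delta * \det (mxsub f g' phi)).
split; last by rewrite addrC subrK.
by have := minor_ideal_exchange phi rows f cols g'; rewrite (prednK ht1) -DeltaE.
Qed.
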